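(* Identify $\mathrm{SO}(2)$ with $\mathbb{C}_1=\{z\in\mathbb{C}:|z|=1\}$, let $n$ be even, let $G([n],E)$ be the complete graph, and let $\boldsymbol{z}^\star\in\mathbb{C}_1^n$ be the ground truth. Then there exist a choice of bad edges $E_b\subset E$ such that every node $j$ is incident to exactly one edge of $E_b$, a choice of corrupted measurements $z_{jk}\in\mathbb{C}_1$ for $jk\in E_b$ (with $z_{jk}=z_j^\star\overline{z_k^\star}$ for $jk\in E\setminus E_b$), and a point $\hat{\boldsymbol{z}}\in\mathbb{C}_1^n$ with $0<\delta(\hat{\boldsymbol{z}})<\pi$ that is a fixed point of GD-$L_1$-MRA, i.e. $\partial_vF_\angle^j(\hat z_j;\hat{\boldsymbol{z}})\ge 0$ for all $j\in[n]$ and $v\in\{\pm1\}$.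
   Context: $d_\angle(z_1,z_2)=|\arg(z_1\overline{z_2})|$ with $\arg\in(-\pi,\pi]$; $\delta(\boldsymbol{z})=\max_{jk\in E}d_\angle(\overline{z_j^\star}z_j,\overline{z_k^\star}z_k)$. Coordinate energy: $F_\angle^j(y;\boldsymbol{z})=\sum_{k\in[n]\setminus\{j\}}d_\angle(y,z_{jk}z_k)$; for $v\in\{\pm1\}$, $\partial_vF_\angle^j(y;\boldsymbol{z})=\lim_{h\to0^+}(F_\angle^j(e^{ivh}y;\boldsymbol{z})-F_\angle^j(y;\boldsymbol{z}))/h$. GD-$L_1$-MRA cyclically updates one coordinate $j$ at a time: if some $v\in\{\pm1\}$ has $\partial_vF_\angle^j(z_j;\boldsymbol{z})<0$, it moves $z_j$ along $s\mapsto e^{ivs}z_j$ to the first point of $\{\pm z_{jk}z_k\}$ at which $\partial_vF_\angle^j\ge0$; otherwise $z_j$ is left unchanged. Hence its fixed points are exactly the $\boldsymbol{z}$ with $\partial_vF_\angle^j(z_j;\boldsymbol{z})\ge0$ for all $j$ and $v\in\{\pm1\}$. *)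

From Stdlib Require Import Reals List Arith.
From Coquelicot Require Import Coquelicot.
Open Scope R_scope.

Definition Carg (z : C) : R :=
  if Rle_dec 0 (Im z) then acos (Re z / Cmod z)
  else - acos (Re z / Cmod z).

Definition d_ang (z1 z2 : C) : R := Rabs (Carg (Cmult z1 (Cconj z2))).

Definition cexpi (t : R) : C := (cos t, sin t).

Definition sumR (l : list nat) (f : nat -> R) : R :=
  fold_right (fun k acc => f k + acc) 0 l.

Definition Fang (n : nat) (zm : nat -> nat -> C) (z : nat -> C) (j : nat) (y : C) : R :=
  sumR (filter (fun k => negb (Nat.eqb k j)) (seq 0 n))
       (fun k => d_ang y (Cmult (zm j k) (z k))).

Definition dirderiv_is (n : nat) (zm : nat -> nat -> C) (z : nat -> C) (j : nat)
  (v : R) (y : C) (l : R) : Prop :=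
  filterlim (fun h => (Fang n zm z j (Cmult (cexpi (v * h)) y) - Fang n zm z j y) / h)
            (at_right 0) (locally l).

Definition edges (n : nat) : list (nat * nat) :=
  flat_map (fun j => map (fun k => (j, k)) (seq (S j) (n - S j))) (seq 0 n).

(** delta(z) = max_{jk in E} d_angle(conj(zs_j) z_j, conj(zs_k) z_k)
    (the max of nonnegative numbers; 0 when E is empty). *)
Definition delta (n : nat) (zs z : nat -> C) : R :=
  fold_right Rmax 0
    (map (fun e => d_ang (Cmult (Cconj (zs (fst e))) (z (fst e)))
                         (Cmult (Cconj (zs (snd e))) (z (snd e)))) (edges n)).

(** Rotate the odd-indexed nodes of the ground truth by a quarter turn, [zhat j = zs j e^{i alpha j}]
    with [alpha] equal to [0] on even and [PI/2] on odd indices, and corrupt exactly the edges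
    [{2i, 2i+1}] so that they agree with [zhat].  Then [delta zhat = PI/2], and near [zhat j] the
    coordinate energy is [t |-> sum_k |t + D_k|] with every offset [D_k] in [{0, PI/2, -PI/2}]:
    [D_k = 0] for the partner of [j] and for the nodes of the same parity.  Hence the one-sided
    slopes are [sum_k (|v + D_k| - |D_k|)] (the difference quotient is even constant for
    [0 < h < 1], as every nonzero offset exceeds [1] in modulus), and grouping [k] by pairs [{2i, 2i+1}] every pair
    contributes [|v| + (|v + D| - |D|) >= 0] or, for the pair of [j], just [|v|]. *)

From Stdlib Require Import Reals List Lra Lia.
From Coquelicot Require Import Coquelicot.
Open Scope R_scope.

Lemma cexpi_add a b : cexpi (a + b) = Cmult (cexpi a) (cexpi b).
Proof. unfold cexpi, Cmult; simpl. rewrite cos_plus, sin_plus. f_equal; ring. Qed.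

Lemma cexpi_0 : cexpi 0 = RtoC 1.
Proof. unfold cexpi. rewrite cos_0, sin_0. reflexivity. Qed.

Lemma Cconj_cexpi a : Cconj (cexpi a) = cexpi (- a).
Proof. unfold cexpi, Cconj; simpl. rewrite cos_neg, sin_neg. reflexivity. Qed.

Lemma Cmod_cexpi a : Cmod (cexpi a) = 1.
Proof.
  unfold Cmod, cexpi; simpl.
  replace (cos a * (cos a * 1) + sin a * (sin a * 1)) with 1 by
    (pose proof (sin2_cos2 a) as H; unfold Rsqr in H; lra).
  apply sqrt_1.
Qed.

Lemma Cmult_unit_conj (w : C) : Cmod w = 1 -> Cmult w (Cconj w) = RtoC 1.
Proof. intros Hw. rewrite <- Cmod2_conj, Hw. f_equal. ring. Qed.

Lemma Carg_cexpi a : - PI < a <= PI -> Carg (cexpi a) = a.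
Proof.
  intros Ha. unfold Carg. rewrite Cmod_cexpi. unfold cexpi; simpl. rewrite Rdiv_1_r.
  destruct (Rle_dec 0 (sin a)) as [Hs | Hs]; destruct (Rlt_le_dec a 0) as [Ha0 | Ha0].
  - pose proof (sin_lt_0_var a ltac:(lra) Ha0). lra.
  - apply acos_cos; lra.
  - rewrite <- cos_neg, acos_cos; lra.
  - pose proof (sin_ge_0 a Ha0 ltac:(lra)). lra.
Qed.

Lemma d_ang_mulr u u' w : Cmod w = 1 -> d_ang (Cmult u w) (Cmult u' w) = d_ang u u'.
Proof.
  intros Hw. unfold d_ang. rewrite Cmult_conj.
  replace (Cmult (Cmult u w) (Cmult (Cconj u') (Cconj w)))
    with (Cmult (Cmult u (Cconj u')) (Cmult w (Cconj w))) by ring.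
  rewrite Cmult_unit_conj by exact Hw. now rewrite Cmult_1_r.
Qed.

Lemma d_ang_cexpi a b : - PI < a - b <= PI -> d_ang (cexpi a) (cexpi b) = Rabs (a - b).
Proof.
  intros Hab. unfold d_ang.
  rewrite Cconj_cexpi, <- cexpi_add, Carg_cexpi; [reflexivity | lra].
Qed.

Lemma Rabs_affine_slope v D h : Rabs v <= 1 -> (D = 0 \/ 1 <= Rabs D) -> 0 <= h <= 1 ->
  Rabs (v * h + D) - Rabs D = h * (Rabs (v + D) - Rabs D).
Proof.
  intros Hv HD Hh. apply Rabs_le_between in Hv.
  destruct HD as [-> | HD].
  - rewrite !Rplus_0_r, Rabs_R0, Rabs_mult, (Rabs_pos_eq h) by lra. ring.
  - destruct (Rle_lt_dec 0 D) as [HD0 | HD0].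
    + rewrite Rabs_pos_eq in HD by lra.
      rewrite !Rabs_pos_eq by nra. ring.
    + rewrite Rabs_left in HD by lra.
      rewrite !Rabs_left1 by nra. ring.
Qed.

Lemma filterlim_at_right_const (f : R -> R) (l : R) :
  (forall h, 0 < h < 1 -> f h = l) -> filterlim f (at_right 0) (locally l).
Proof.
  intros Hf. eapply filterlim_ext_loc; [| apply filterlim_const].
  exists (mkposreal 1 Rlt_0_1). intros h Hball Hh. symmetry. apply Hf.
  unfold ball in Hball; simpl in Hball.
  unfold AbsRing_ball, abs, minus, plus, opp in Hball; simpl in Hball.
  apply Rabs_def2 in Hball. lra.
Qed.

Lemma sumR_ext_in l f g : (forall k, In k l -> f k = g k) -> sumR l f = sumR l g.
Proof. induction l as [| a l IH]; simpl; intros H; auto. now rewrite H, IH by auto. Qed.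

Lemma sumR_sub l f g : sumR l f - sumR l g = sumR l (fun k => f k - g k).
Proof. induction l as [| a l IH]; simpl; [lra |]. rewrite <- IH. lra. Qed.

Lemma sumR_scal l c f : sumR l (fun k => c * f k) = c * sumR l f.
Proof. induction l as [| a l IH]; simpl; [lra |]. rewrite IH. lra. Qed.

Lemma sumR_filter p l f :
  sumR (filter p l) f = sumR l (fun k => if p k then f k else 0).
Proof. induction l as [| a l IH]; simpl; auto. destruct (p a); simpl; rewrite IH; lra. Qed.

Lemma sumR_app l1 l2 f : sumR (l1 ++ l2) f = sumR l1 f + sumR l2 f.
Proof. induction l1 as [| a l1 IH]; simpl; [lra |]. rewrite IH. lra. Qed.

Lemma sumR_seq_pairs_nonneg m g :
  (forall i, (i < m)%nat -> 0 <= g (2 * i)%nat + g (2 * i + 1)%nat) ->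
  0 <= sumR (seq 0 (2 * m)) g.
Proof.
  induction m as [| m IH]; intros Hg; [simpl; lra |].
  replace (2 * S m)%nat with (2 * m + 2)%nat by lia.
  rewrite seq_app, sumR_app. simpl.
  replace (S (m + (m + 0))) with (2 * m + 1)%nat by lia.
  replace (m + (m + 0))%nat with (2 * m)%nat by lia.
  assert (Hlast := Hg m (Nat.lt_succ_diag_r m)).
  assert (0 <= sumR (seq 0 (2 * m)) g) by (apply IH; intros; apply Hg; lia).
  lra.
Qed.

Lemma fold_right_Rmax_lub l c :
  0 <= c -> (forall x, In x l -> x <= c) -> fold_right Rmax 0 l <= c.
Proof. induction l as [| a l IH]; simpl; intros Hc Hl; auto. apply Rmax_lub; auto. Qed.

Lemma fold_right_Rmax_In l x : In x l -> x <= fold_right Rmax 0 l.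
Proof.
  induction l as [| a l IH]; simpl; intros Hx; [contradiction |].
  destruct Hx as [<- | Hx]; [apply Rmax_l |].
  eapply Rle_trans; [apply IH, Hx | apply Rmax_r].
Qed.

Lemma In_edges n a b : In (a, b) (edges n) -> (a < n)%nat /\ (b < n)%nat.
Proof.
  unfold edges. rewrite in_flat_map. intros [x [Hx Hab]].
  apply in_map_iff in Hab. destruct Hab as [k [Hk Hkin]]. injection Hk as <- <-.
  apply in_seq in Hx. apply in_seq in Hkin. lia.
Qed.

Lemma edges_01 n : (2 <= n)%nat -> In (0%nat, 1%nat) (edges n).
Proof.
  intros Hn. unfold edges. rewrite in_flat_map. exists 0%nat. split.
  - apply in_seq; lia.
  - apply in_map_iff. exists 1%nat. split; [reflexivity | apply in_seq; lia].
Qed.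

Definition partner (j : nat) : nat := if Nat.even j then S j else pred j.

Definition alpha (j : nat) : R := if Nat.even j then 0 else PI / 2.

(* The offset [D_k] of the summand of node [k] in the coordinate energy of node [j] near [zhat j]. *)
Definition offset (j k : nat) : R := if Nat.eqb (partner j) k then 0 else alpha j - alpha k.

Lemma partner_double i : partner (2 * i) = (2 * i + 1)%nat.
Proof. unfold partner. rewrite Nat.even_even. lia. Qed.

Lemma partner_double_succ i : partner (2 * i + 1) = (2 * i)%nat.
Proof. unfold partner. rewrite Nat.even_odd. lia. Qed.

Lemma alpha_double i : alpha (2 * i) = 0.
Proof. unfold alpha. now rewrite Nat.even_even. Qed.

Lemma alpha_double_succ i : alpha (2 * i + 1) = PI / 2.
Proof. unfold alpha. now rewrite Nat.even_odd. Qed.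

Lemma partner_involutive j : partner (partner j) = j.
Proof.
  destruct (Nat.Even_or_Odd j) as [[i ->] | [i ->]].
  - now rewrite partner_double, partner_double_succ.
  - now rewrite partner_double_succ, partner_double.
Qed.

Lemma partner_neq j : partner j <> j.
Proof.
  destruct (Nat.Even_or_Odd j) as [[i ->] | [i ->]].
  - rewrite partner_double. lia.
  - rewrite partner_double_succ. lia.
Qed.

Lemma partner_lt n j : Nat.Even n -> (j < n)%nat -> (partner j < n)%nat.
Proof.
  intros [m ->] Hj. destruct (Nat.Even_or_Odd j) as [[i ->] | [i ->]].
  - rewrite partner_double. lia.
  - rewrite partner_double_succ. lia.
Qed.

Lemma partner_eqb_sym j k : Nat.eqb (partner k) j = Nat.eqb (partner j) k.
Proof.
  apply Bool.eq_true_iff_eq. rewrite !Nat.eqb_eq. split; intros <-; apply partner_involutive.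
Qed.

Lemma alpha_cases j : alpha j = 0 \/ alpha j = PI / 2.
Proof. unfold alpha. destruct (Nat.even j); auto. Qed.

Lemma PI_gt_3 : 3 < PI.
Proof. pose proof PI2_3_2. lra. Qed.

Lemma Rabs_alpha_sub j k : Rabs (alpha j - alpha k) <= PI / 2.
Proof.
  pose proof PI_gt_3. apply Rabs_le.
  destruct (alpha_cases j) as [-> | ->], (alpha_cases k) as [-> | ->]; lra.
Qed.

Lemma offset_cases j k : offset j k = 0 \/ Rabs (offset j k) = PI / 2.
Proof.
  pose proof PI_gt_3. unfold offset. destruct (Nat.eqb (partner j) k); [now left |].
  destruct (alpha_cases j) as [-> | ->], (alpha_cases k) as [-> | ->].
  - left; lra.
  - right. rewrite Rabs_left; lra.
  - right. rewrite Rabs_pos_eq; lra.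
  - left; lra.
Qed.

Lemma offset_alpha_eq j k : alpha j = alpha k -> offset j k = 0.
Proof. intros Hjk. unfold offset. rewrite Hjk, Rminus_diag. now destruct (Nat.eqb _ _). Qed.

Definition others (n j : nat) : list nat := filter (fun k => negb (Nat.eqb k j)) (seq 0 n).

Definition slope (j : nat) (v : R) (k : nat) : R := Rabs (v + offset j k) - Rabs (offset j k).

Lemma slope_ge j v k : - Rabs v <= slope j v k.
Proof.
  unfold slope. pose proof (Rabs_triang (- v) (v + offset j k)) as H.
  rewrite Rabs_Ropp in H. replace (- v + (v + offset j k)) with (offset j k) in H by ring. lra.
Qed.

Lemma slope_offset_0 j v k : offset j k = 0 -> slope j v k = Rabs v.
Proof. intros H. unfold slope. rewrite H, Rplus_0_r, Rabs_R0. ring. Qed.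

Lemma slope_pair_nonneg j v i :
  0 <= (if negb (Nat.eqb (2 * i) j) then slope j v (2 * i) else 0)
     + (if negb (Nat.eqb (2 * i + 1) j) then slope j v (2 * i + 1) else 0).
Proof.
  pose proof (Rabs_pos v) as Hv.
  destruct (Nat.eqb_spec (2 * i) j) as [Hj | Hj]; destruct (Nat.eqb_spec (2 * i + 1) j) as [Hj' | Hj'];
    cbn [negb]; try lia.
  - rewrite slope_offset_0 by (subst j; unfold offset; now rewrite partner_double, Nat.eqb_refl). lra.
  - rewrite slope_offset_0 by (subst j; unfold offset; now rewrite partner_double_succ, Nat.eqb_refl). lra.
  - pose proof (slope_ge j v (2 * i)). pose proof (slope_ge j v (2 * i + 1)).
    destruct (alpha_cases j) as [Ha | Ha].
    + rewrite (slope_offset_0 j v (2 * i)) by (apply offset_alpha_eq; now rewrite alpha_double). lra.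
    + rewrite (slope_offset_0 j v (2 * i + 1)) by (apply offset_alpha_eq; now rewrite alpha_double_succ).
      lra.
Qed.

Lemma slope_sum_nonneg n j v : Nat.Even n -> 0 <= sumR (others n j) (slope j v).
Proof.
  intros [m ->]. unfold others. rewrite sumR_filter.
  apply sumR_seq_pairs_nonneg. intros i _. apply slope_pair_nonneg.
Qed.

Section QuarterTurnFixedPoint.

Variable n : nat.
Variable zs : nat -> C.
Hypothesis zs_unit : forall j, (j < n)%nat -> Cmod (zs j) = 1.

Definition zhat (j : nat) : C := Cmult (zs j) (cexpi (alpha j)).

Definition zmeas (j k : nat) : C :=
  if Nat.eqb (partner j) k then Cmult (zhat j) (Cconj (zhat k)) else Cmult (zs j) (Cconj (zs k)).

Lemma zhat_unit j : (j < n)%nat -> Cmod (zhat j) = 1.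
Proof. intros Hj. unfold zhat. rewrite Cmod_mult, zs_unit, Cmod_cexpi by exact Hj. ring. Qed.

Lemma zmeas_unit j k : (j < n)%nat -> (k < n)%nat -> Cmod (zmeas j k) = 1.
Proof.
  intros Hj Hk. unfold zmeas. destruct (Nat.eqb _ _).
  - rewrite Cmod_mult, Cmod_conj, !zhat_unit by assumption. ring.
  - rewrite Cmod_mult, Cmod_conj, !zs_unit by assumption. ring.
Qed.

Lemma zmeas_conj j k : zmeas k j = Cconj (zmeas j k).
Proof.
  unfold zmeas. rewrite partner_eqb_sym.
  destruct (Nat.eqb _ _); rewrite Cmult_conj, Cconj_conj; apply Cmult_comm.
Qed.

Lemma Cconj_zs_zhat j : (j < n)%nat -> Cmult (Cconj (zs j)) (zhat j) = cexpi (alpha j).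
Proof.
  intros Hj. unfold zhat.
  rewrite Cmult_assoc, (Cmult_comm (Cconj _)), Cmult_unit_conj by auto. apply Cmult_1_l.
Qed.

Lemma zmeas_zhat j k : (j < n)%nat -> (k < n)%nat ->
  Cmult (zmeas j k) (zhat k) = Cmult (cexpi (- offset j k)) (zhat j).
Proof.
  intros Hj Hk. unfold zmeas, offset. destruct (Nat.eqb _ _).
  - rewrite Ropp_0, cexpi_0, Cmult_1_l, <- Cmult_assoc, (Cmult_comm (Cconj _)).
    rewrite Cmult_unit_conj by (apply zhat_unit; exact Hk). apply Cmult_1_r.
  - transitivity (Cmult (zs j) (cexpi (alpha k))).
    + rewrite <- Cmult_assoc, Cconj_zs_zhat by exact Hk. reflexivity.
    + unfold zhat. rewrite Cmult_assoc, (Cmult_comm _ (zs j)), <- Cmult_assoc, <- cexpi_add.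
      do 2 f_equal. ring.
Qed.

Lemma Fang_near_zhat j t : (j < n)%nat -> Rabs t < PI / 2 ->
  Fang n zmeas zhat j (Cmult (cexpi t) (zhat j)) = sumR (others n j) (fun k => Rabs (t + offset j k)).
Proof.
  intros Hj Ht. apply Rabs_def2 in Ht. apply sumR_ext_in. intros k Hk.
  apply filter_In in Hk. destruct Hk as [Hk _]. apply in_seq in Hk.
  rewrite zmeas_zhat, d_ang_mulr by (try apply zhat_unit; lia).
  rewrite d_ang_cexpi.
  - f_equal. ring.
  - pose proof PI_gt_3.
    destruct (offset_cases j k) as [Ho | Ho]; [rewrite Ho; lra |].
    assert (- (PI / 2) <= offset j k <= PI / 2) by (apply Rabs_le_between; lra). lra.
Qed.

Lemma zhat_dirderiv j v : (j < n)%nat -> Rabs v <= 1 ->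
  dirderiv_is n zmeas zhat j v (zhat j) (sumR (others n j) (slope j v)).
Proof.
  intros Hj Hv. apply filterlim_at_right_const. intros h Hh.
  assert (Hvh : Rabs (v * h) < PI / 2).
  { pose proof PI_gt_3. rewrite Rabs_mult, (Rabs_pos_eq h) by lra. nra. }
  assert (E0 := Fang_near_zhat j 0 Hj ltac:(rewrite Rabs_R0; pose proof PI_gt_3; lra)).
  rewrite cexpi_0, Cmult_1_l in E0.
  rewrite Fang_near_zhat, E0, sumR_sub by assumption.
  rewrite (sumR_ext_in _ _ (fun k => h * slope j v k)), sumR_scal; [field; lra |].
  intros k _. rewrite Rplus_0_l. apply Rabs_affine_slope; [assumption | | lra].
  destruct (offset_cases j k) as [Ho | Ho]; [now left | right].
  rewrite Ho. pose proof PI_gt_3. lra.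
Qed.

Lemma delta_zhat : (2 <= n)%nat -> delta n zs zhat = PI / 2.
Proof.
  intros Hn. unfold delta.
  assert (Hedge : forall a b, In (a, b) (edges n) ->
    d_ang (Cmult (Cconj (zs a)) (zhat a)) (Cmult (Cconj (zs b)) (zhat b)) = Rabs (alpha a - alpha b)).
  { intros a b Hab. apply In_edges in Hab.
    rewrite !Cconj_zs_zhat by tauto. apply d_ang_cexpi.
    pose proof PI_gt_3. pose proof (Rabs_alpha_sub a b) as Hab'.
    apply Rabs_le_between in Hab'. lra. }
  apply Rle_antisym.
  - apply fold_right_Rmax_lub; [pose proof PI_gt_3; lra |].
    intros x Hx. apply in_map_iff in Hx. destruct Hx as [[a b] [<- Hab]].
    simpl. rewrite Hedge by exact Hab. apply Rabs_alpha_sub.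
  - eapply Rle_trans; [| apply fold_right_Rmax_In, in_map_iff; exists (0, 1)%nat;
      split; [reflexivity | apply edges_01, Hn]].
    simpl. rewrite Hedge by (apply edges_01, Hn).
    unfold alpha; cbn [Nat.even]. rewrite Rabs_left; pose proof PI_gt_3; lra.
Qed.

End QuarterTurnFixedPoint.

Theorem lemma6 (n : nat) (zs : nat -> C) :
  (0 < n)%nat -> Nat.Even n ->
  (forall j, (j < n)%nat -> Cmod (zs j) = 1) ->
  exists (Eb : nat -> nat -> Prop) (zm : nat -> nat -> C) (zh : nat -> C),
    (* E_b is a set of edges of the complete graph on [n] *)
    (forall j k, Eb j k -> (j < n)%nat /\ (k < n)%nat /\ j <> k) /\
    (forall j k, Eb j k -> Eb k j) /\
    (* every node is incident to exactly one bad edge *)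
    (forall j, (j < n)%nat -> exists! k, Eb j k) /\
    (* measurements lie on the unit circle, z_kj = conj z_jk *)
    (forall j k, (j < n)%nat -> (k < n)%nat -> j <> k ->
       Cmod (zm j k) = 1 /\ zm k j = Cconj (zm j k)) /\
    (* good edges carry the exact measurements *)
    (forall j k, (j < n)%nat -> (k < n)%nat -> j <> k -> ~ Eb j k ->
       zm j k = Cmult (zs j) (Cconj (zs k))) /\
    (* the point zh lies in C_1^n *)
    (forall j, (j < n)%nat -> Cmod (zh j) = 1) /\
    0 < delta n zs zh /\ delta n zs zh < PI /\
    (* zh is a fixed point of GD-L1-MRA *)
    (forall j, (j < n)%nat -> forall v : R, (v = 1 \/ v = -1) ->
       exists l, dirderiv_is n zm zh j v (zh j) l /\ 0 <= l).
Proof.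
  intros Hn Heven Hzs.
  assert (Hn2 : (2 <= n)%nat) by (destruct Heven as [m Hm]; lia).
  exists (fun j k => (j < n)%nat /\ k = partner j), (zmeas zs), (zhat zs).
  repeat match goal with |- _ /\ _ => split end.
  - intros j k [Hj ->]. split; [exact Hj | split; [now apply (partner_lt n) | apply not_eq_sym, partner_neq]].
  - intros j k [Hj ->]. split; [now apply (partner_lt n) | symmetry; apply partner_involutive].
  - intros j Hj. exists (partner j). split; [now split | now intros k [_ ->]].
  - intros j k Hj Hk _. split; [now apply (zmeas_unit n) | apply zmeas_conj].
  - intros j k Hj _ _ Hbad. unfold zmeas.
    destruct (Nat.eqb_spec (partner j) k) as [<- | _]; [now exfalso; apply Hbad | reflexivity].
  - intros j Hj. now apply (zhat_unit n).
  - rewrite (delta_zhat n zs Hzs Hn2). pose proof PI_gt_3. lra.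
  - rewrite (delta_zhat n zs Hzs Hn2). pose proof PI_gt_3. lra.
  - intros j Hj v Hv. exists (sumR (others n j) (slope j v)). split.
    + apply (zhat_dirderiv n zs Hzs); [assumption |].
      apply Rabs_le. destruct Hv as [-> | ->]; lra.
    + now apply slope_sum_nonneg.
Qed.
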